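(* Let $d_x, d_1, d_2 \ge 1$ be integers, let $\sigma:\mathbb{R}\to\mathbb{R}$ be a continuous piecewise linear function with $p\ge 2$ linear pieces, and let $\alpha_1,\alpha_2\in(0,1]$ be such that $\alpha_1 d_1$ and $\alpha_2 d_2$ are positive integers. Consider the architecture of fully connected networks $f_W:\mathbb{R}^{d_x}\to\mathbb{R}$ with two hidden layers of widths $\alpha_1 d_1$ and $\alpha_2 d_2$ (obtained by removing entire neurons, i.e. structured pruning), $$f_W(x) = W^3\,\sigma\big(W^2\,\sigma(W^1 x + b^1) + b^2\big) + b^3,$$ with $\sigma$ applied coordinatewise and $W^1\in\mathbb{R}^{\alpha_1 d_1\times d_x}$, $W^2\in\mathbb{R}^{\alpha_2 d_2\times \alpha_1 d_1}$, $W^3\in\mathbb{R}^{1\times \alpha_2 d_2}$, $b^1,b^2,b^3$ of matching dimensions. Then the memorization capacity of this architecture is at most $$\alpha_1\alpha_2 d_1 d_2\, p(p-1) + \alpha_2 d_2(p-1) + 2.$$ In particular, for ReLU ($p=2$) it is at most $2\alpha_1\alpha_2 d_1 d_2 + \alpha_2 d_2 + 2$.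
   Context: Memorization capacity: for a network architecture $f_W$ with learnable parameters $W$ and input dimension $d_x$, the memorization capacity is the largest $N$ such that for every choice of inputs $x_1,\dots,x_N\in\mathbb{R}^{d_x}$ (pairwise distinct) and every choice of labels $y_1,\dots,y_N\in[-1,1]$, there exist parameters $W$ with $f_W(x_i)=y_i$ for all $1\le i\le N$. A function $\mathbb{R}\to\mathbb{R}$ has ''$p$ linear pieces'' if $\mathbb{R}$ can be partitioned into $p$ intervals on each of which it is affine (and not fewer). *)

From mathcomp Require Import all_boot all_order all_algebra.
From mathcomp Require Import all_classical all_reals all_analysis.
Set Implicit Arguments. Unset Strict Implicit. Unset Printing Implicit Defensive.
Import Order.TTheory GRing.Theory Num.Theory.
Local Open Scope ring_scope.

Definition affine_on (R : realType) (sigma : R -> R) (I : interval R) : Prop :=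
  exists a b : R, forall x : R, x \in I -> sigma x = a * x + b.

Definition affine_partition (R : realType) (sigma : R -> R) (n : nat) : Prop :=
  exists I : 'I_n -> interval R,
    (forall x : R, exists! i : 'I_n, x \in I i) /\
    (forall i : 'I_n, affine_on sigma (I i)).

Definition has_linear_pieces (R : realType) (sigma : R -> R) (p : nat) : Prop :=
  affine_partition sigma p /\ (forall n, (n < p)%N -> ~ affine_partition sigma n).

Definition net (R : realType) (sigma : R -> R) (dx k1 k2 : nat)
  (W1 : 'M[R]_(k1, dx)) (b1 : 'cV[R]_k1)
  (W2 : 'M[R]_(k2, k1)) (b2 : 'cV[R]_k2)
  (W3 : 'M[R]_(1, k2)) (b3 : R) (x : 'cV[R]_dx) : R :=
  (W3 *m map_mx sigma (W2 *m map_mx sigma (W1 *m x + b1) + b2)) 0 0 + b3.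

Definition memorizes (R : realType) (sigma : R -> R) (dx k1 k2 N : nat) : Prop :=
  forall (X : 'I_N -> 'cV[R]_dx) (Y : 'I_N -> R),
    injective X -> (forall i, -1 <= Y i <= 1) ->
    exists (W1 : 'M[R]_(k1, dx)) (b1 : 'cV[R]_k1)
           (W2 : 'M[R]_(k2, k1)) (b2 : 'cV[R]_k2)
           (W3 : 'M[R]_(1, k2)) (b3 : R),
      forall i, net sigma W1 b1 W2 b2 W3 b3 (X i) = Y i.

From mathcomp Require Import all_boot all_order all_algebra.
From mathcomp Require Import all_classical all_reals all_analysis.
From mathcomp Require Import ring lra zify.
Import Order.TTheory GRing.Theory Num.Theory numFieldNormedType.Exports.
Set Implicit Arguments. Unset Strict Implicit.
Local Open Scope ring_scope.

(* Along the diagonal line t |-> (t, ..., t) of inputs, a network of this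
   architecture is a piecewise affine function of t.  A continuous sigma with p
   pieces has at most p - 1 breakpoints, and composing sigma with a function with
   m breakpoints gives at most m + (m + 1)(p - 1) of them, so the output has at
   most k1 k2 p (p - 1) + k2 (p - 1) breakpoints.  A piecewise affine f with
   f(i) = (-1)^i for i < N has, for each i < N - 2, a breakpoint c_i in ]i, i + 2[
   at which (-1)^(i+1) f is at least 1 (the maximum of (-1)^(i+1) f on
   [i, i + 2]); these points are pairwise distinct, so N - 2 is at most the
   number of breakpoints. *)

Section PiecewiseAffine.
Variable R : realFieldType.
Implicit Types (f g sg : R -> R) (s S T r : seq R) (a b c u v x : R).

Definition affine_between f a b :=
  exists al be : R, forall x, a <= x <= b -> f x = al * x + be.

Definition breakpoints f s :=
  forall a b, (forall c, c \in s -> (c <= a) || (b <= c)) -> affine_between f a b.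

Definition pw_affine f (m : nat) := exists2 s, (size s <= m)%N & breakpoints f s.

Lemma affine_between_degenerate f a b : b <= a -> affine_between f a b.
Proof.
move=> ba; exists 0, (f a) => x /andP [ax xb].
have -> : x = a by apply/le_anti; rewrite ax (le_trans xb ba).
by rewrite mul0r add0r.
Qed.

Lemma eq_pw_affine f g m : f =1 g -> pw_affine f m -> pw_affine g m.
Proof.
move=> fg [s hs hf]; exists s => // a b /hf [al [be E]].
by exists al, be => x hx; rewrite -fg E.
Qed.

Lemma pw_affine_affine al be : pw_affine (fun x => al * x + be) 0.
Proof. by exists [::] => // a b _; exists al, be. Qed.

Lemma breakpoints_scale k f s : breakpoints f s -> breakpoints (fun x => k * f x) s.
Proof.
move=> hf a b /hf [al [be E]].
by exists (k * al), (k * be) => x hx; rewrite E //; ring.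
Qed.

Lemma pw_affine_scale k f m : pw_affine f m -> pw_affine (fun x => k * f x) m.
Proof. by move=> [s hs /(breakpoints_scale k) hf]; exists s. Qed.

Lemma pw_affine_add f g m n :
  pw_affine f m -> pw_affine g n -> pw_affine (fun x => f x + g x) (m + n).
Proof.
move=> [s hs hf] [t ht hg]; exists (s ++ t); first by rewrite size_cat leq_add.
move=> a b hst.
have [al [be Ef]] : affine_between f a b.
  by apply: hf => c hc; apply: hst; rewrite mem_cat hc.
have [al' [be' Eg]] : affine_between g a b.
  by apply: hg => c hc; apply: hst; rewrite mem_cat hc orbT.
by exists (al + al'), (be + be') => x hx; rewrite Ef // Eg //; ring.
Qed.

Lemma pw_affine_sum n (F : 'I_n -> R -> R) m : (forall i, pw_affine (F i) m) ->
  pw_affine (fun x => \sum_(i < n) F i x) (n * m).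
Proof.
elim: n F => [|n IH] F hF.
  by apply: (@eq_pw_affine (fun x => 0 * x + 0)) (pw_affine_affine 0 0) => x;
    rewrite big_ord0 mul0r addr0.
apply: (@eq_pw_affine (fun x => \sum_(i < n) F (widen_ord (leqnSn n) i) x + F ord_max x)).
  by move=> x; rewrite big_ord_recr.
by rewrite mulSn addnC; apply: pw_affine_add; [apply: IH | apply: hF].
Qed.

Lemma breakpoints_comp_affine sg S al be : breakpoints sg S ->
  breakpoints (fun x => sg (al * x + be)) [seq (c - be) / al | c <- S].
Proof.
move=> hsg a b hab; have [ba|ab] := leP b a; first exact: affine_between_degenerate.
have [->|al0] := eqVneq al 0.
  by exists 0, (sg be) => x _; rewrite !mul0r !add0r.
have [ga [gd E]] : affine_between sg (Num.min (al * a + be) (al * b + be))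
                                     (Num.max (al * a + be) (al * b + be)).
  apply: hsg => c hc; have := hab _ (map_f (fun c => (c - be) / al) hc).
  set y := (c - be) / al; have -> : c = al * y + be by rewrite /y; field.
  clearbody y; rewrite le_min ge_max.
  have [aln|alp|] := ltgtP al 0; last by move/eqP: al0.
    by case/orP => h; apply/orP; [right|left]; apply/andP; split; nra.
  by case/orP => h; apply/orP; [left|right]; apply/andP; split; nra.
exists (ga * al), (ga * be + gd) => x /andP [ax xb]; rewrite E; first ring.
rewrite ge_min le_max; have [aln|alp|] := ltgtP al 0; last by move/eqP: al0.
  by apply/andP; split; apply/orP; [right|left]; nra.
by apply/andP; split; apply/orP; [left|right]; nra.
Qed.

(* For sorted [r], one pair of distinct points in each of the [size r + 1]
   maximal closed intervals delimited by [r]. *)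
Fixpoint piece_ends_from x s : seq (R * R) :=
  if s is y :: s' then (x, y) :: piece_ends_from y s' else [:: (x, x + 1)].

Definition piece_ends r : seq (R * R) :=
  if r is x :: s then (x - 1, x) :: piece_ends_from x s else [:: (0, 1)].

Lemma size_piece_ends r : size (piece_ends r) = (size r).+1.
Proof.
have size_from x s : size (piece_ends_from x s) = (size s).+1.
  by elim: s x => [|y s IH] x //=; rewrite IH.
by case: r => [|x s] //=; rewrite size_from.
Qed.

Lemma piece_ends_from_gap a b x s : a < b -> path <=%R x s -> x <= a ->
    (forall e, e \in x :: s -> (e <= a) || (b <= e)) ->
  exists l u, [/\ (l, u) \in piece_ends_from x s, l < u &
    forall e, e \in x :: s -> (e <= Num.min a l) || (Num.max b u <= e)].
Proof.
elim: s x => [|y s IH] x ab xs xa hgap.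
  exists x, (x + 1); split; [exact: mem_head | by rewrite ltrDl |].
  by move=> e; rewrite inE => /eqP ->; rewrite (min_r xa) lexx.
move: xs => /= /andP [xy ys].
have gap_ys e : e \in y :: s -> (e <= a) || (b <= e).
  by move=> ye; apply: hgap; rewrite in_cons ye orbT.
have [by_|yb] := leP b y.
  exists x, y; split; [exact: mem_head | exact: le_lt_trans xa (lt_le_trans ab by_) |].
  move=> e; rewrite in_cons => /orP [/eqP ->|ye]; first by rewrite (min_r xa) lexx.
  rewrite (max_r by_) orbC; move: ye; rewrite in_cons => /orP [/eqP ->|];
    by [rewrite lexx | move/(allP (order_path_min le_trans ys)) ->].
have ya : y <= a by have := gap_ys y (mem_head y s); rewrite [b <= y]leNgt yb orbF.
have [l [u [hlu lu hr]]] := IH y ab ys ya gap_ys.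
exists l, u; split => //; first by rewrite in_cons hlu orbT.
move=> e; rewrite in_cons => /orP [/eqP ->|]; last exact: hr.
have /orP [yl|] := hr y (mem_head _ _); first by rewrite (le_trans xy yl).
by rewrite ge_max => /andP [by_ _]; move: (le_trans by_ ya); rewrite leNgt ab.
Qed.

Lemma piece_ends_gap a b r : a < b -> sorted <=%R r ->
    (forall e, e \in r -> (e <= a) || (b <= e)) ->
  exists l u, [/\ (l, u) \in piece_ends r, l < u &
    forall e, e \in r -> (e <= Num.min a l) || (Num.max b u <= e)].
Proof.
case: r => [|x s] ab xs hgap; first by exists 0, 1; split; rewrite ?mem_head.
have [bx|xb] := leP b x.
  exists (x - 1), x; split; [exact: mem_head | by rewrite ltrBlDr ltrDl |].
  move=> e he; rewrite (max_r bx) orbC; move: he; rewrite in_cons.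
  by case/orP => [/eqP ->|/(allP (order_path_min le_trans xs)) ->]; rewrite ?lexx.
have xa : x <= a by have := hgap x (mem_head x s); rewrite [b <= x]leNgt xb orbF.
have [l [u [hlu lu hr]]] := piece_ends_from_gap ab xs xa hgap.
by exists l, u; split; rewrite ?in_cons ?hlu ?orbT.
Qed.

Definition secant_slope g (q : R * R) := (g q.2 - g q.1) / (q.2 - q.1).

Definition secant_inv g (q : R * R) c :=
  (c - (g q.1 - secant_slope g q * q.1)) / secant_slope g q.

Lemma secant_inv_affine g l u al be c : l != u ->
  g l = al * l + be -> g u = al * u + be -> secant_inv g (l, u) c = (c - be) / al.
Proof.
move=> lu gl gu; have slope : secant_slope g (l, u) = al.
  by rewrite /secant_slope /= gl gu; field; rewrite subr_eq0 eq_sym.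
by rewrite /secant_inv slope /= gl; congr (_ / _); ring.
Qed.

Lemma pw_affine_comp sg g m n : pw_affine sg m -> pw_affine g n ->
  pw_affine (fun x => sg (g x)) (n + n.+1 * m).
Proof.
move=> [S hS hsg] [T hT hg].
exists (T ++ [seq secant_inv g q c | q <- piece_ends (sort <=%R T), c <- S]).
  by rewrite size_cat size_allpairs size_piece_ends size_sort leq_add // leq_mul.
move=> a b hab; have [ba|ab] := leP b a; first exact: affine_between_degenerate.
have [l [u [hlu lu hgap]]] : exists l u, [/\ (l, u) \in piece_ends (sort <=%R T),
    l < u & forall e, e \in sort <=%R T -> (e <= Num.min a l) || (Num.max b u <= e)].
  apply: piece_ends_gap ab (sort_sorted le_total T) _ => e.
  by rewrite mem_sort => he; apply: hab; rewrite mem_cat he.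
have [al [be Eg]] : affine_between g (Num.min a l) (Num.max b u).
  by apply: hg => e he; apply: hgap; rewrite mem_sort.
have gl : g l = al * l + be by apply: Eg; rewrite ge_min le_max lexx (ltW lu) !orbT.
have gu : g u = al * u + be by apply: Eg; rewrite ge_min le_max lexx (ltW lu) !orbT.
have [ga [gd Esg]] : affine_between (fun x => sg (al * x + be)) a b.
  apply: (breakpoints_comp_affine (al := al) (be := be) hsg) => _ /mapP [c hc ->].
  rewrite -(secant_inv_affine c (negbT (lt_eqF lu)) gl gu); apply: hab.
  by rewrite mem_cat (allpairs_f (fun q c => secant_inv g q c) hlu hc) orbT.
exists ga, gd => x /[dup] /andP [ax xb] /Esg <-.
by rewrite Eg // ge_min le_max ax xb.
Qed.

Lemma affine_between_le_max f u v x :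
  affine_between f u v -> u <= x <= v -> f x <= Num.max (f u) (f v).
Proof.
move=> [al [be E]] /andP [ux xv]; have uv := le_trans ux xv.
rewrite le_max !E ?ux ?xv ?lexx ?uv //.
by have [al0|al0] := leP 0 al; apply/orP; [right|left]; nra.
Qed.

Lemma sub_count_lt (P Q : pred R) s c : subpred P Q ->
  c \in s -> Q c -> ~~ P c -> (count P s < count Q s)%N.
Proof.
move=> PQ; elim: s => // y s IH; rewrite in_cons => /orP [/eqP <-|cs] Qc nPc /=.
  by rewrite Qc (negbTE nPc) add0n add1n ltnS sub_count.
rewrite -addnS leq_add ?IH //.
by case: (P y) (PQ y) => // ->.
Qed.

Lemma breakpoints_max f s u v x : breakpoints f s -> u <= x <= v ->
  exists w, [/\ w \in u :: v :: s, u <= w <= v & f x <= f w].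
Proof.
move=> hf; have [n] := ubnP (count (fun c => u < c < v) s).
elim: n u v x => // n IH u v x hn /andP [ux xv].
have [/hasP [c cs /andP [uc cv]]|/hasPn noc] := boolP (has (fun c => u < c < v) s).
  have lt_count (u' v' : R) : u <= u' -> v' <= v -> ~~ (u' < c < v') ->
      (count (fun c => (u' < c < v')%R) s < n)%N.
    move=> uu' v'v nc; rewrite -ltnS; apply: leq_trans hn.
    apply: (sub_count_lt (c := c)) => //; last by rewrite uc.
    by move=> y /andP [/(le_lt_trans uu') -> /lt_le_trans ->].
  have sub_in w : w \in [:: u, c & s] \/ w \in [:: c, v & s] -> w \in [:: u, v & s].
    by rewrite !inE => -[] /or3P [] h; rewrite ?h ?orbT // (eqP h) cs !orbT.
  have [xc|cx] := leP x c.
    have hn' : (count (fun y => (u < y < c)%R) s < n)%N.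
      by apply: lt_count; rewrite ?lexx ?(ltW cv) // ltxx andbF.
    have [w [hw /andP [uw wc] fw]] := IH u c x hn' (introT andP (conj ux xc)).
    by exists w; split; [apply: sub_in; left | rewrite uw (le_trans wc (ltW cv)) |].
  have hn' : (count (fun y => (c < y < v)%R) s < n)%N.
    by apply: lt_count; rewrite ?lexx ?(ltW uc) // ltxx.
  have [w [hw /andP [cw wv] fw]] := IH c v x hn' (introT andP (conj (ltW cx) xv)).
  by exists w; split; [apply: sub_in; right | rewrite wv (le_trans (ltW uc) cw) |].
have uv := le_trans ux xv.
have /(affine_between_le_max (x := x)) : affine_between f u v.
  by apply: hf => c /noc; rewrite negb_and -!leNgt orbC.
rewrite ux xv le_max => /(_ isT) /orP [fu|fv].
  by exists u; split; rewrite ?mem_head ?lexx.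
by exists v; split; rewrite ?inE ?eqxx ?orbT ?lexx ?andbT.
Qed.

Lemma sign_change_breakpoint f s i : breakpoints f s ->
    f i%:R = (-1) ^+ i -> f i.+1%:R = (-1) ^+ i.+1 -> f i.+2%:R = (-1) ^+ i.+2 ->
  exists c, [/\ c \in s, i%:R < c < i.+2%:R & 1 <= (-1) ^+ i.+1 * f c].
Proof.
move=> hf fi fi1 fi2; set g := fun x => (-1) ^+ i.+1 * f x.
have gi : g i%:R = -1 by rewrite /g fi exprS mulN1r mulNr -expr2 sqrr_sign.
have gi2 : g i.+2%:R = -1.
  by rewrite /g fi2 [X in _ * X]exprS mulN1r mulrN -expr2 sqrr_sign.
have gi1 : g i.+1%:R = 1 by rewrite /g fi1 -expr2 sqrr_sign.
have hx : (i%:R : R) <= (i.+1%:R : R) <= (i.+2%:R : R) by rewrite !ler_nat !leqnSn.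
have hg : breakpoints g s := breakpoints_scale _ hf.
have [w [hw /andP [iw wi2]]] := breakpoints_max hg hx; rewrite gi1 => gw.
have wi : w != i%:R by apply: contraTneq gw => ->; rewrite gi; lra.
have wi2' : w != i.+2%:R by apply: contraTneq gw => ->; rewrite gi2; lra.
move: hw; rewrite !inE (negbTE wi) (negbTE wi2') /= => ws.
by exists w; split; rewrite // !lt_neqAle eq_sym wi wi2' iw wi2.
Qed.

Lemma alternating_breakpoints f s N : breakpoints f s ->
  (forall i, (i < N)%N -> f i%:R = (-1) ^+ i) -> (N <= size s + 2)%N.
Proof.
move=> hf fN.
have [c hc] : {c : nat -> R & forall i, (i.+2 < N)%N ->
    [/\ c i \in s, i%:R < c i < i.+2%:R & 1 <= (-1) ^+ i.+1 * f (c i)]}.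
  apply: (@choice _ _ (fun i y => (i.+2 < N)%N ->
    [/\ y \in s, i%:R < y < i.+2%:R & 1 <= (-1) ^+ i.+1 * f y])) => i.
  have [iN|] := ltnP i.+2 N; last by exists 0.
  have [y hy] := sign_change_breakpoint hf (fN i (ltnW (ltnW iN)))
    (fN i.+1 (ltnW iN)) (fN i.+2 iN).
  by exists y.
have hN i : i \in iota 0 (N - 2) -> (i.+2 < N)%N.
  by rewrite mem_iota add0n ltn_subRL addnC addn2.
(* Windows ]i, i + 2[ of indices of equal parity are disjoint; at indices of
   opposite parity the signs of f at the chosen points differ. *)
have c_inj : {in iota 0 (N - 2) &, injective c}.
  move=> i j /hN /hc [_ /andP [ci ci'] si] /hN /hc [_ /andP [cj cj'] sj] cij.
  apply/eqP; apply: contraTT isT => nij.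
  have [pij|pij] := eqVneq (odd i) (odd j).
    have sep k l : (k < l)%N -> odd k = odd l -> (k.+2 <= l)%N.
      move=> kl okl; rewrite ltn_neqAle kl andbT; apply/eqP => ekl.
      by move: okl; rewrite -ekl /=; case: (odd k).
    have [ij|ji|/eqP] := ltngtP i j; last by rewrite (negbTE nij).
    - have : (i.+2%:R : R) <= j%:R by rewrite ler_nat sep.
      by move: ci'; rewrite cij; lra.
    - have : (j.+2%:R : R) <= i%:R by rewrite ler_nat sep.
      by move: ci; rewrite cij; lra.
  have sgn : (-1) ^+ j.+1 = - (-1) ^+ i.+1 :> R.
    rewrite -signr_odd -[in RHS]signr_odd /=.
    by move: pij; case: (odd i); case: (odd j); rewrite ?expr0 ?expr1 ?opprK.
  by move: sj si; rewrite cij sgn mulNr; lra.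
have : (size (map c (iota 0 (N - 2))) <= size s)%N.
  apply: uniq_leq_size; first by rewrite map_inj_in_uniq ?iota_uniq.
  by move=> _ /mapP [i /hN /hc [cs _ _] ->].
by rewrite size_map size_iota leq_subLR addnC.
Qed.

End PiecewiseAffine.

Section ContinuousPiecewiseAffine.
Variable R : realType.
Local Open Scope classical_set_scope.

Lemma continuous_affine_closed_itv (f : R -> R) a b al be : continuous f -> a < b ->
  (forall x, a < x < b -> f x = al * x + be) -> forall x, a <= x <= b -> f x = al * x + be.
Proof.
move=> fc ab E.
have hc : continuous (fun x => f x - (al * x + be)).
  move=> x; apply: cvgB; first exact: fc.
  by apply: cvgD; [apply: cvgM; [exact: cvg_cst | exact: cvg_id] | exact: cvg_cst].
have near_zero (F : set_system R) (FF : ProperFilter F) x :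
    (fun t => f t - (al * t + be)) @ F --> f x - (al * x + be) ->
    (\forall t \near F, a < t < b) -> f x = al * x + be.
  move=> hx Fab; apply/eqP; rewrite -subr_eq0; apply/eqP.
  apply: (closed_cvg _ (@closed_eq R 0) _ _ hx).
  by apply: filterS Fab => t /E ->; rewrite subrr.
move=> x /andP []; rewrite le_eqVlt => /orP [/eqP <- _|ax].
  apply: (near_zero _ _ a (cvg_at_right_filter (hc a))).
  near=> t; apply/andP; split; near: t; [exact: nbhs_right_gt | exact: nbhs_right_lt].
rewrite le_eqVlt => /orP [/eqP ->|xb]; last by rewrite E // ax xb.
apply: (near_zero _ _ b (cvg_at_left_filter (hc b))).
near=> t; apply/andP; split; near: t; [exact: nbhs_left_gt | exact: nbhs_left_lt].
Unshelve. all: end_near.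
Qed.

Definition itv_lower (I : interval R) : option R :=
  if I is Interval (BSide _ v) _ then Some v else None.

Lemma mem_itv_lower_gap (I : interval R) a b t w :
    (forall v, itv_lower I = Some v -> (v <= a) || (b <= v)) ->
  t \in I -> t < b -> a < w -> w <= t -> w \in I.
Proof.
case: I => l u gap; rewrite !itv_boundlr => /andP [lt tu] tb aw wt.
rewrite (le_trans _ tu) ?leBSide //= andbT.
case: l gap lt => [bb v|[]] //= gap lt.
have vt : v <= t by move: lt; rewrite leBSide; case: (bb) => //= /ltW.
have vw : v < w.
  by have := gap v erefl; rewrite [b <= v]leNgt (le_lt_trans vt tb) orbF => /le_lt_trans->.
by rewrite leBSide; case: (bb) => /=; rewrite ?vw ?(ltW vw).
Qed.

Lemma exists_lt_seq (s : seq R) : exists x0, forall v, v \in s -> x0 < v.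
Proof.
elim: s => [|y s [x0 lt_x0]]; first by exists 0.
exists (Num.min x0 (y - 1)) => v; rewrite in_cons => /orP [/eqP ->|/lt_x0 x0v].
  by rewrite gt_min ltrBlDr ltrDl ltr01 orbT.
by rewrite gt_min x0v.
Qed.

Section IntervalPartition.
Variables (p : nat) (I : 'I_p -> interval R).
Hypothesis I_partition : forall x : R, exists! i, x \in I i.

(* Finite lower ends suffice as breakpoints, and some interval is unbounded below. *)
Definition lower_ends := pmap (itv_lower \o I) (enum 'I_p).

Lemma size_lower_ends : (size lower_ends <= p.-1)%N.
Proof.
have [x0 lt_x0] := exists_lt_seq lower_ends.
have [j [x0j _]] := I_partition x0.
have lowj : itv_lower (I j) = None.
  case Ij : (I j) x0j => [l u]; rewrite itv_boundlr => /andP [l_x0 _].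
  case: l Ij l_x0 => [bb v|[]] // Ij l_x0.
  have vx0 : v <= x0 by move: l_x0; rewrite leBSide; case: (bb) => //= /ltW.
  have : v \in lower_ends.
    by rewrite mem_pmap; apply/mapP; exists j; rewrite ?mem_enum //= Ij.
  by move=> /lt_x0; rewrite ltNge vx0.
have p_gt0 : (0 < p)%N := leq_ltn_trans (leq0n j) (ltn_ord j).
rewrite -ltnS (prednK p_gt0) size_pmap -[X in (_ < X)%N]size_enum_ord.
rewrite -(count_predC (fun i => itv_lower (I i))) -addn1 leq_add2l -has_count.
by apply/hasP; exists j; rewrite ?mem_enum //= lowj.
Qed.

Lemma lower_ends_gap a b : a < b -> (forall c, c \in lower_ends -> (c <= a) || (b <= c)) ->
  exists j, forall z, a < z < b -> z \in I j.
Proof.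
move=> ab gap; pose y := (a + b) / 2.
have ay : a < y by rewrite /y; lra.
have yb : y < b by rewrite /y; lra.
have [j [yj uniq_j]] := I_partition y.
have Igap i v : itv_lower (I i) = Some v -> (v <= a) || (b <= v).
  by move=> iv; apply: gap; rewrite mem_pmap; apply/mapP; exists i; rewrite ?mem_enum //= iv.
exists j => z /andP [az zb]; have [zy|yz] := leP z y.
  exact: mem_itv_lower_gap (Igap j) yj yb az zy.
have [k [zk _]] := I_partition z.
by rewrite (uniq_j k (mem_itv_lower_gap (Igap k) zk zb ay (ltW yz))).
Qed.

End IntervalPartition.

Lemma affine_partition_pw_affine (sg : R -> R) p :
  continuous sg -> affine_partition sg p -> pw_affine sg p.-1.
Proof.
move=> sgc [I [Ipart Iaff]]; exists (lower_ends I); first exact: size_lower_ends.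
move=> a b gap; have [ba|ab] := leP b a; first exact: affine_between_degenerate.
have [j ab_j] := lower_ends_gap Ipart ab gap.
have [al [be E]] := Iaff j.
by exists al, be; apply: continuous_affine_closed_itv => // x /ab_j /E.
Qed.

End ContinuousPiecewiseAffine.

Section PiecewiseAffineNetwork.
Variables (R : realType) (sigma : R -> R) (q : nat).
Hypothesis sigma_pw : pw_affine sigma q.

Lemma pw_affine_layer n k m (u : R -> 'cV[R]_n) (W : 'M[R]_(k, n)) (b : 'cV[R]_k) :
    (forall i, pw_affine (fun t => u t i 0) m) ->
  forall j, pw_affine (fun t => (W *m map_mx sigma (u t) + b) j 0) (n * (m + m.+1 * q)).
Proof.
move=> hu j.
apply: (@eq_pw_affine _ (fun t => \sum_(i < n) W j i * sigma (u t i 0) + (0 * t + b j 0))).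
  by move=> t; rewrite !mxE mul0r add0r; congr (_ + _); apply: eq_bigr => i _; rewrite mxE.
rewrite -[X in pw_affine _ X]addn0; apply: pw_affine_add (pw_affine_affine _ _).
by apply: pw_affine_sum => i; apply: pw_affine_scale; apply: pw_affine_comp sigma_pw (hu i).
Qed.

Lemma pw_affine_net_const dx k1 k2 (W1 : 'M[R]_(k1, dx)) (b1 : 'cV[R]_k1)
    (W2 : 'M[R]_(k2, k1)) (b2 : 'cV[R]_k2) (W3 : 'M[R]_(1, k2)) (b3 : R) :
  pw_affine (fun t => net sigma W1 b1 W2 b2 W3 b3 (const_mx t : 'cV[R]_dx))
    (k2 * (k1 * q + (k1 * q).+1 * q)).
Proof.
have layer1 i : pw_affine (fun t => (W1 *m const_mx t + b1) i 0) 0.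
  apply: (@eq_pw_affine _ (fun t => (\sum_l W1 i l) * t + b1 i 0)) (pw_affine_affine _ _) => t.
  by rewrite !mxE mulr_suml; congr (_ + _); apply: eq_bigr => l _; rewrite mxE.
have layer2 := pw_affine_layer W2 b2 layer1.
rewrite add0n mul1n in layer2.
apply: eq_pw_affine (pw_affine_layer W3 (const_mx b3) layer2 0) => t.
by rewrite /net !mxE.
Qed.

Lemma memorizes_le dx k1 k2 N : (0 < dx)%N -> memorizes sigma dx k1 k2 N ->
  (N <= k2 * (k1 * q + (k1 * q).+1 * q) + 2)%N.
Proof.
move=> dx_gt0 mem.
have X_inj : injective (fun i : 'I_N => const_mx i%:R : 'cV[R]_dx).
  move=> i j /matrixP /(_ (Ordinal dx_gt0) 0); rewrite !mxE => /eqP.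
  by rewrite eqr_nat => /eqP /ord_inj.
have Y_bound (i : 'I_N) : -1 <= ((-1) ^+ i : R) <= 1.
  by rewrite -signr_odd; case: (odd i); rewrite ?expr0 ?expr1 /=; lra.
have [W1 [b1 [W2 [b2 [W3 [b3 fit]]]]]] := mem _ _ X_inj Y_bound.
have [s hs hf] := pw_affine_net_const W1 b1 W2 b2 W3 b3.
apply: leq_trans (alternating_breakpoints hf _) _; last by rewrite leq_add2r.
by move=> i iN; apply: (fit (Ordinal iN)).
Qed.

End PiecewiseAffineNetwork.

Unset Implicit Arguments.

Theorem corollary2 (R : realType) (dx d1 d2 p k1 k2 : nat) (sigma : R -> R)
  (alpha1 alpha2 : R) :
  (1 <= dx)%N -> (1 <= d1)%N -> (1 <= d2)%N ->
  continuous sigma -> (2 <= p)%N -> has_linear_pieces sigma p ->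
  0 < alpha1 <= 1 -> 0 < alpha2 <= 1 ->
  (0 < k1)%N -> (0 < k2)%N ->
  alpha1 * d1%:R = k1%:R -> alpha2 * d2%:R = k2%:R ->
  forall N : nat, memorizes sigma dx k1 k2 N ->
    (N <= k1 * k2 * (p * (p - 1)) + k2 * (p - 1) + 2)%N.
Proof.
move=> dx_gt0 _ _ sigma_cont p_gt1 [sigma_part _] _ _ _ _ _ _ N mem.
have sigma_pw := affine_partition_pw_affine sigma_cont sigma_part.
apply: leq_trans (memorizes_le sigma_pw dx_gt0 mem) _.
case: p p_gt1 {sigma_part sigma_pw} => // q _; rewrite subn1 /=; lia.
Qed.
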